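(* Let $d \geq 0$ be an integer and $\rho > 0$. Let $\mathsf{S}$ be a random sprinkle of density $\rho$ in $(1+d)$-dimensional Minkowski spacetime $\mathbb{M}^{1+d}$, regarded as a poset with the induced causal order. Then, with probability $1$, $\mathsf{S}$ is total locally unsymmetric; that is, almost surely, for every finite subset $F \subseteq \mathsf{S}$, every automorphism of the poset $\mathsf{S} \setminus F$ that moves only finitely many elements is the identity.
   Context: Minkowski spacetime $\mathbb{M}^{1+d} = \mathbb{R}^{1+d}$ with coordinates $(t, x_1,\dots,x_d)$, volume measure $\nu$ the Lebesgue measure, and causal partial order $p \preceq q$ iff $q - p$ is future-directed causal or zero (i.e. $q_0 - p_0 \geq \sqrt{\sum_{i=1}^d (q_i-p_i)^2}$). A sprinkle of density $\rho>0$ is a realisation of the Poisson point process on $\mathbb{M}^{1+d}$ with intensity $\rho\,\nu$: it is a random locally finite subset $\mathsf{S}$ (finite intersection with every compact set) such that for every precompact region $K$, the probability that $\mathsf{S}\cap K$ has exactly $n$ points is $e^{-\rho\nu(K)}\frac{(\rho\nu(K))^n}{n!}$, with points of disjoint regions independent (equivalently, for measurable $B_n$ in the space of $n$-point subsets of $K$, $\mu_K(B_n) = e^{-\rho\nu(K)}\frac{\rho^n}{n!}\nu^n(\Sigma_{K,n}^{-1}(B_n))$, where $\Sigma_{K,n}$ maps $n$-tuples of distinct points of $K$ to the corresponding $n$-element set). The sprinkle is a poset with the restriction of $\preceq$. For a poset $P$, an automorphism $\alpha$ of $P$ is a bijection $P\to P$ preserving and reflecting the order; an element $a$ is fixed if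 $\alpha(a)=a$. A local symmetry of $P$ is a non-identity automorphism of $P$ for which the set of non-fixed elements is finite. For $k \in \mathbb{N}_0$, a poset $P$ is $k$-stable locally unsymmetric if for every subset $S \subseteq P$ with $|S| \leq k$, the poset $P \setminus S$ (with the induced order) has no local symmetries. $P$ is total locally unsymmetric if it is $k$-stable locally unsymmetric for every finite $k \leq |P|$, i.e. removing any finite set of elements leaves a poset without local symmetries. *)

From HB Require Import structures.
From mathcomp Require Import all_boot all_order all_algebra.
From mathcomp Require Import all_classical all_reals all_analysis.
Set Implicit Arguments. Unset Strict Implicit. Unset Printing Implicit Defensive.
Import numFieldNormedType.Exports.
Import Order.TTheory GRing.Theory Num.Theory.
Local Open Scope classical_set_scope.
Local Open Scope ring_scope.

(* Points of Minkowski spacetime M^{1+d}: row vectors of length 1+d;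
   coordinate 0 is time t, coordinates 1..d are x_1..x_d. *)
Definition mpt (R : realType) (d : nat) := 'rV[R]_(d.+1).

Definition causal_le (R : realType) (d : nat) (p q : mpt R d) : Prop :=
  Num.sqrt (\sum_(i < d) (q ord0 (lift ord0 i) - p ord0 (lift ord0 i)) ^+ 2)
    <= q ord0 ord0 - p ord0 ord0.

Definition box (R : realType) (n : nat) (a b : 'rV[R]_n) : set 'rV[R]_n :=
  [set x | forall i, a ord0 i <= x ord0 i < b ord0 i].
Definition box_vol (R : realType) (n : nat) (a b : 'rV[R]_n) : R :=
  \prod_(i < n) Num.max (b ord0 i - a ord0 i) 0.

(* Lebesgue (outer) measure on R^n: infimum of total volume of countable box covers.
   On Borel sets this is the Lebesgue measure nu. *)
Definition leb_vol (R : realType) (n : nat) (A : set 'rV[R]_n) : \bar R :=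
  ereal_inf [set s : \bar R | exists a b : nat -> 'rV[R]_n,
     A `<=` \bigcup_k box (a k) (b k) /\
     s = (\sum_(0 <= k <oo) (box_vol (a k) (b k))%:E)%E].

Definition borel_set (R : realType) (n : nat) (K : set 'rV[R]_n) : Prop :=
  <<s open >> K.

Definition precompact_region (R : realType) (n : nat) (K : set 'rV[R]_n) : Prop :=
  borel_set K /\ compact (closure K).

Definition count_event (T : Type) (R : realType) (d : nat)
  (S : T -> set (mpt R d)) (K : set (mpt R d)) (n : nat) : set T :=
  [set w | ((S w `&` K) #= `I_n)%card].

(* Poisson point process (sprinkle) of intensity rho * nu on M^{1+d},
   realised on the probability space (Omega, P). *)
Definition is_sprinkle (R : realType) (d : nat) (rho : R)
  (dO : measure_display) (Omega : measurableType dO) (P : probability Omega R)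
  (S : Omega -> set (mpt R d)) : Prop :=
  (forall w K, compact K -> finite_set (S w `&` K)) /\
  (forall K n, precompact_region K ->
     measurable (count_event S K n) /\
     P (count_event S K n) =
       (expR (- (rho * fine (leb_vol K))) * (rho * fine (leb_vol K)) ^+ n
          / (n`!)%:R)%:E) /\
  (forall (m : nat) (K : 'I_m -> set (mpt R d)) (n : 'I_m -> nat),
     (forall i, precompact_region (K i)) ->
     (forall i j, i != j -> K i `&` K j = set0) ->
     P (\bigcap_i count_event S (K i) (n i)) =
       (\prod_(i < m) P (count_event S (K i) (n i)))%E).

Definition is_automorphism (R : realType) (d : nat) (X : set (mpt R d))
  (f : mpt R d -> mpt R d) : Prop :=
  [/\ (forall x, X x -> X (f x)),
      (forall x y, X x -> X y -> f x = f y -> x = y),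
      (forall y, X y -> exists2 x, X x & f x = y) &
      (forall x y, X x -> X y -> (causal_le x y <-> causal_le (f x) (f y)))].

Definition local_symmetry (R : realType) (d : nat) (X : set (mpt R d))
  (f : mpt R d -> mpt R d) : Prop :=
  [/\ is_automorphism X f,
      (exists2 x, X x & f x <> x) &
      finite_set [set x | X x /\ f x <> x]].

Definition k_stable_locally_unsymmetric (R : realType) (d : nat) (k : nat)
  (X : set (mpt R d)) : Prop :=
  forall F : set (mpt R d), F `<=` X -> (F #<= `I_k)%card ->
    forall f, ~ local_symmetry (X `\` F) f.

Definition total_locally_unsymmetric (R : realType) (d : nat)
  (X : set (mpt R d)) : Prop :=
  forall k : nat, k_stable_locally_unsymmetric k X.

(* If x <> x' lie in the sprinkle, some null coordinate u = t - s x_j (s = +-1) of one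
   of them, a, is strictly smaller than that of the other, b.  As u is monotone for the
   causal order and constant along the null direction (1, s e_j), every point near the
   null ray from a, pushed slightly to the future, is in the future of a but not of b.
   Such a ray carries infinitely many disjoint balls of equal volume, which a Poisson
   process leaves all empty with probability 0, and after discretisation only countably
   many rays are involved.  So almost surely any two points of the sprinkle are told
   apart by sprinkle points arbitrarily late in time; an automorphism moving finitely
   many points fixes such a point, hence moves no point at all.  In dimension 1 + 0 the
   sprinkle is a chain, which has no local symmetries. *)

From HB Require Import structures.
From mathcomp Require Import all_boot all_order all_algebra.
From mathcomp Require Import all_classical all_reals all_analysis.
From mathcomp Require Import lra ring.
Import Order.TTheory GRing.Theory Num.Theory.
Import numFieldNormedType.Exports.
Local Open Scope classical_set_scope.
Local Open Scope ring_scope.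
Set Implicit Arguments. Unset Strict Implicit. Unset Printing Implicit Defensive.

Local Notation tcoord p := (p ord0 ord0).
Local Notation xcoord p k := (p ord0 (lift ord0 k)).

Lemma mulr_floor_divP (R : realType) (r x : R) : 0 < r ->
  x - r < r * (Num.floor (x / r))%:~R <= x.
Proof.
move=> r0; have xE : r * (x / r) = x by rewrite mulrC divfK // gt_eqF.
have le_x := floor_le (x / r); have gt_x := floorD1_gt (x / r).
rewrite intrD /= in gt_x; apply/andP; split; nra.
Qed.

Lemma exists_nat_gt (R : realType) (x : R) : exists n : nat, x < n%:R.
Proof.
exists (Num.Def.archi_bound `|x|).
exact: le_lt_trans (ler_norm x) (archi_boundP (normr_ge0 x)).
Qed.

Lemma ball_rowP (R : realType) n (c y : 'rV[R]_n) (r : R) : 0 < r ->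
  ball c r y <-> forall i, `|c ord0 i - y ord0 i| < r.
Proof.
move=> r0; rewrite /ball /=; split.
- by move=> [_ H] i; have := H ord0 i.
- by move=> H; split => // i j; rewrite (ord1 i); exact: H.
Qed.

Lemma precompact_region_ball (R : realType) d (c : mpt R d) (r : R) : 0 < r ->
  precompact_region (ball c r).
Proof.
move=> r0; split; first by apply: sub_gen_smallest; exact: ball_open.
pose B := [set v : mpt R d | forall i,
  `[c ord0 i - r, c ord0 i + r]%classic (v ord0 i)].
have cB : compact B.
  apply: (@rV_compact _ _ (fun i => `[c ord0 i - r, c ord0 i + r]%classic)) => i.
  exact: segment_compact.
have clB : closed B by apply: compact_closed => //; exact: norm_hausdorff.
apply: (subclosed_compact _ cB); first exact: closed_closure.
rewrite (closure_id B).1 //; apply: closureS => y /(ball_rowP _ _ r0) cy i.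
have := cy i; rewrite ltr_distl /= in_itv /= => /andP[? ?].
by apply/andP; split; lra.
Qed.

Definition translate (R : realType) n (v : 'rV[R]_n) (A : set 'rV[R]_n) :=
  [set y | A (y - v)].

Lemma leb_vol_translate (R : realType) n (v : 'rV[R]_n) (A : set 'rV[R]_n) :
  leb_vol (translate v A) = leb_vol A.
Proof.
pose covers (B : set 'rV[R]_n) := [set s : \bar R | exists a b : nat -> 'rV[R]_n,
  B `<=` \bigcup_k box (a k) (b k) /\
  s = (\sum_(0 <= k <oo) (box_vol (a k) (b k))%:E)%E].
have coversT u B : covers B `<=` covers (translate u B).
  move=> s [a [b [cov ->]]]; exists (fun k => a k + u), (fun k => b k + u); split.
    move=> y /cov [k _ yk]; exists k => // i.
    by have := yk i; rewrite !mxE => /andP[? ?]; apply/andP; split; lra.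
  have volE k : box_vol (a k + u) (b k + u) = box_vol (a k) (b k).
    by apply: eq_bigr => i _; rewrite !mxE; congr (Num.max _ _); ring.
  by rewrite (eq_eseriesr (fun k _ => congr1 EFin (volE k))).
have translateK : translate (- v) (translate v A) = A.
  by apply/seteqP; split => y; rewrite /translate /= opprK addrK.
rewrite /leb_vol; congr ereal_inf; apply/seteqP; split; last exact: coversT.
by have := coversT (- v) (translate v A); rewrite translateK.
Qed.

Lemma ball_translate (R : realType) d (c : mpt R d) (r : R) : 0 < r ->
  ball c r = translate c (ball 0 r).
Proof.
move=> r0; apply/seteqP; split => y /= /(ball_rowP _ _ r0) cy;
  apply/(ball_rowP _ _ r0) => i; have := cy i;
  by rewrite !mxE sub0r normrN -normrN opprB.
Qed.

Lemma finite_set_argmin (R : realType) (T : eqType) (A : set T) (f : T -> R) :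
  finite_set A -> A !=set0 -> exists2 m, A m & forall z, A z -> f m <= f z.
Proof.
move=> /finite_seqP [s ->] [x0 sx0]; have : x0 \in s by [].
elim: s x0 {sx0} => [//|a [|b s] IH] x0 _.
  by exists a => [|z]; rewrite /= inE // => /eqP ->.
have [m sm minm] := IH b (mem_head b s).
have [fam|fma] := leP (f a) (f m).
  exists a => [|z]; first by rewrite /= inE eqxx.
  by rewrite /= inE => /orP[/eqP -> //|sz]; exact: le_trans fam (minm z sz).
exists m => [|z]; first by rewrite /= inE sm orbT.
by rewrite /= inE => /orP[/eqP ->|/minm //]; exact: ltW.
Qed.

Lemma finite_set_ub (R : realType) (T : eqType) (A : set T) (f : T -> R) :
  finite_set A -> exists M, forall z, A z -> f z <= M.
Proof.
move=> finA; have [[z0 Az0]|A0] := pselect (A !=set0).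
  have [m Am minm] := finite_set_argmin (fun z => - f z) finA (ex_intro _ z0 Az0).
  by exists (f m) => z /minm; rewrite lerN2.
by exists 0 => z Az; exfalso; apply: A0; exists z.
Qed.

(** * Local symmetries *)

Lemma total_locally_unsymmetric_of_separating (R : realType) d (X : set (mpt R d)) :
  (forall x x' E, X x -> X x' -> x <> x' -> finite_set E ->
     exists y, [/\ X y, ~ E y & ~ (causal_le x y <-> causal_le x' y)]) ->
  total_locally_unsymmetric X.
Proof.
move=> sep k F FX Fk f [[fX _ _ f_mono] [x Xx fx] fin].
have finF : finite_set F := card_le_finite Fk (finite_II k).
have finE : finite_set (F `|` [set z | (X `\` F) z /\ f z <> z]) by rewrite finite_setU.
have [y [Xy Ey xy]] := sep x (f x) _ Xx.1 (fX x Xx).1 (nesym fx) finE.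
have yF : ~ F y by move=> Fy; apply: Ey; left.
have fy : f y = y by apply: contrapT => fy; apply: Ey; right.
by apply: xy; rewrite (f_mono x y Xx (conj Xy yF)) fy.
Qed.

Lemma total_locally_unsymmetric_set0 (R : realType) d :
  total_locally_unsymmetric (set0 : set (mpt R d)).
Proof. by move=> k F _ _ f [_ [x []]]. Qed.

Lemma causal_le_dim0 (R : realType) (p q : mpt R 0) :
  causal_le p q <-> tcoord p <= tcoord q.
Proof. by rewrite /causal_le big_ord0 sqrtr0 subr_ge0. Qed.

(* An automorphism of a chain fixes its earliest moved point [m]: the preimage of
   [m] and the image of [m] are moved, hence both later than [m]. *)
Lemma total_locally_unsymmetric_dim0 (R : realType) (X : set (mpt R 0)) :
  total_locally_unsymmetric X.
Proof.
move=> k F _ _ f [[fX f_inj f_onto f_mono] [x Xx fx] fin].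
have [m [Xm fm] minm] :=
  finite_set_argmin (fun p : mpt R 0 => tcoord p) fin (ex_intro _ x (conj Xx fx)).
have [z Xz fz] := f_onto m Xm.
have zm : z <> m by move=> zm; apply: fm; rewrite -{1}zm fz.
have mz : tcoord m <= tcoord z by apply: minm; split => //; rewrite fz => /esym.
have mfm : tcoord m <= tcoord (f m).
  by apply: minm; split; [exact: fX | move=> /(f_inj _ _ (fX m Xm) Xm)].
have /(f_mono m z Xm Xz) : causal_le m z by rewrite causal_le_dim0.
rewrite fz causal_le_dim0 => fmm; apply: fm; apply/rowP => i.
by rewrite (ord1 i); apply/eqP; rewrite eq_le fmm mfm.
Qed.

(** * Null rays *)

Lemma causal_le_null_coord (R : realType) d (p q : mpt R d) (j : 'I_d) (sg : R) :
  `|sg| = 1 -> causal_le p q -> sg * (xcoord q j - xcoord p j) <= tcoord q - tcoord p.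
Proof.
move=> sg1 pq; apply: le_trans (ler_norm _) _; rewrite normrM sg1 mul1r -sqrtr_sqr.
apply: le_trans pq; apply: ler_wsqrtr.
by rewrite (bigD1 j) //= lerDl sumr_ge0 // => i _; exact: sqr_ge0.
Qed.

Lemma causal_le_near_null_ray (R : realType) d (a y : mpt R d) (j : 'I_d) (sg r t : R) :
  `|sg| = 1 -> 0 <= t ->
  (forall k, `|xcoord y k - xcoord a k - (if k == j then t * sg else 0)| < 2 * r) ->
  t + 2 * (d%:R + 1) * r <= tcoord y - tcoord a -> causal_le a y.
Proof.
move=> sg1 t0 near late.
have r0 : 0 <= r by have := le_lt_trans (normr_ge0 _) (near j); lra.
have d1 : 1 <= d%:R :> R by rewrite ler1n (leq_ltn_trans (leq0n j)).
have near_j : `|xcoord y j - xcoord a j| <= t + 2 * r.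
  have := ler_normD (t * sg) (xcoord y j - xcoord a j - t * sg).
  rewrite addrC subrK normrM sg1 mulr1 ger0_norm //.
  by have := near j; rewrite eqxx; lra.
have off_j : \sum_(k < d | k != j) (xcoord y k - xcoord a k) ^+ 2 <= (2 * d%:R * r) ^+ 2.
  apply: (@le_trans _ _ (\sum_(k < d) (2 * r) ^+ 2)).
    rewrite big_mkcond /=; apply: ler_sum => k _; case: ifPn => [kj|_]; last exact: sqr_ge0.
    by have := near k; rewrite (negbTE kj) subr0 ltr_norml => /andP[? ?]; nra.
  by rewrite sumr_const card_ord -mulr_natr; nra.
rewrite /causal_le (bigD1 j) //=; apply: le_trans late.
rewrite -[leRHS]ger0_norm; last by apply: addr_ge0 => //; nra.
rewrite -sqrtr_sqr; apply: ler_wsqrtr.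
have near_j2 : (xcoord y j - xcoord a j) ^+ 2 <= (t + 2 * r) ^+ 2.
  by move: near_j; rewrite ler_norml => /andP[? ?]; nra.
have cross : 0 <= (t + 2 * r) * (2 * d%:R * r) by apply: mulr_ge0; nra.
have -> : (t + 2 * (d%:R + 1) * r) ^+ 2 =
  (t + 2 * r) ^+ 2 + 2 * ((t + 2 * r) * (2 * d%:R * r)) + (2 * d%:R * r) ^+ 2 by ring.
lra.
Qed.

Lemma null_coord_separation (R : realType) d (x x' : mpt R d.+1) : x <> x' ->
  exists (a b : mpt R d.+1) (j : 'I_d.+1), ((a, b) = (x, x') \/ (a, b) = (x', x)) /\
    0 < `|xcoord a j - xcoord b j| + tcoord b - tcoord a.
Proof.
move=> xx'; have [lt|gt|eq0] := ltgtP (tcoord x) (tcoord x').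
- exists x, x', ord0; split; first by left.
  by have := normr_ge0 (xcoord x ord0 - xcoord x' ord0); lra.
- exists x', x, ord0; split; first by right.
  by have := normr_ge0 (xcoord x' ord0 - xcoord x ord0); lra.
have [j xj] : exists j, xcoord x j <> xcoord x' j.
  apply: contrapT => same; apply: xx'; apply/rowP => m.
  case: (unliftP ord0 m) => [j ->|->] //.
  by apply: contrapT => xj; apply: same; exists j.
exists x, x', j; split; first by left.
by rewrite eq0 addrK normr_gt0 subr_eq0; apply/eqP.
Qed.

Definition null_dir (R : realType) d (j : 'I_d) (s : bool) (m : 'I_d.+1) : R :=
  if unlift ord0 m is Some k then (if k == j then (-1) ^+ s else 0) else 1.

Definition ray_index d := (nat * 'I_d * bool * {ffun 'I_d.+1 -> int})%type.

Definition ray_radius (R : realType) (k : nat) : R := k.+2%:R^-1.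

(* Discretising radius, axis, sign and starting lattice point makes the family of
   rays countable, which is what the probabilistic argument needs. *)
Definition ray_ball (R : realType) d (q : ray_index d) (i : nat) : set (mpt R d) :=
  let: (k, j, s, g) := q in
  ball (\row_m (ray_radius R k * (g m)%:~R + i%:R * null_dir R j s m)) (ray_radius R k).

Definition lattice_round (R : realType) d (r : R) (c : mpt R d) : {ffun 'I_d.+1 -> int} :=
  [ffun m => Num.floor (c ord0 m / r)].

Lemma ray_radius_gt0 (R : realType) k : 0 < ray_radius R k.
Proof. by rewrite invr_gt0 ltr0n. Qed.

Lemma ray_radius_lt (R : realType) (e : R) : 0 < e -> exists k, ray_radius R k < e.
Proof.
move=> e0; have [k ek] := exists_nat_gt e^-1; exists k.
rewrite -[e]invrK ltf_pV2 ?posrE ?invr_gt0 ?ltr0n //.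
by apply: lt_le_trans ek _; rewrite ler_nat (leq_trans (leqnSn k)).
Qed.

Lemma ray_ball_disjoint (R : realType) d (q : ray_index d) (i i' : nat) : i != i' ->
  ray_ball q i `&` ray_ball q i' = set0 :> set (mpt R d).
Proof.
case: q => [[[k j] s] g] ii' /=; set r := ray_radius R k.
have r0 : 0 < r := ray_radius_gt0 R k.
have r2 : r <= 2^-1 by rewrite lef_pV2 ?posrE ?ltr0n // ler_nat.
apply/seteqP; split => // y [/(ball_rowP _ _ r0)/(_ ord0) yi /(ball_rowP _ _ r0)/(_ ord0)].
move: yi; rewrite !mxE /null_dir unlift_none !mulr1 !ltr_distl => /andP[? ?] /andP[? ?].
have [lt|lt] : (i < i')%N \/ (i' < i)%N by move: ii'; rewrite neq_ltn => /orP.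
  have : (i.+1%:R : R) <= i'%:R by rewrite ler_nat.
  by rewrite -addn1 natrD; lra.
have : (i'.+1%:R : R) <= i%:R by rewrite ler_nat.
by rewrite -addn1 natrD; lra.
Qed.

Lemma ray_ball_later (R : realType) d (q : ray_index d) (T : R) :
  exists N, forall i, ray_ball q (N + i) `<=` [set y | T < tcoord y].
Proof.
case: q => [[[k j] s] g]; set r := ray_radius R k.
have r0 : 0 < r := ray_radius_gt0 R k.
have [N TN] := exists_nat_gt (T - r * (g ord0)%:~R + r).
exists N => i y /= /(ball_rowP _ _ r0)/(_ ord0).
rewrite mxE -/r /null_dir unlift_none mulr1 natrD ltr_distl => /andP[_ ?].
by have : (0 : R) <= i%:R := ler0n _ _; lra.
Qed.

Lemma ray_ball_near (R : realType) d (k : nat) (j : 'I_d) (s : bool) (c : mpt R d)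
    (i : nat) (y : mpt R d) :
  let r := ray_radius R k in ray_ball (k, j, s, lattice_round r c) i y ->
  forall m, `|y ord0 m - c ord0 m - i%:R * null_dir R j s m| < 2 * r.
Proof.
move=> r /= /(ball_rowP _ _ (ray_radius_gt0 R k)) near m.
have := mulr_floor_divP (c ord0 m) (ray_radius_gt0 R k).
have := near m; rewrite !mxE ffunE -/r ltr_distl ltr_norml => /andP[? ?] /andP[? ?].
by apply/andP; split; lra.
Qed.

(* The null coordinate [t - (-1)^s x_j] is monotone for the causal order and constant
   along the ray, and the ray starts below that of [b] by at least [(2 d + 8) r]. *)
Lemma ray_ball_separates (R : realType) d (a b : mpt R d.+1) (j : 'I_d.+1) (k i : nat) :
  let r := ray_radius R k in
  let s := xcoord a j < xcoord b j in
  let c := \row_m (a ord0 m + (m == ord0)%:R * (2 * (d.+1%:R + 2) * r)) in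
  (2 * d.+1%:R + 8) * r <= `|xcoord a j - xcoord b j| + tcoord b - tcoord a ->
  ray_ball (k, j, s, lattice_round r c) i `<=` [set y | causal_le a y /\ ~ causal_le b y].
Proof.
move=> r s c sep y /ray_ball_near; rewrite -/r => near.
set sg : R := (-1) ^+ s.
have sg1 : `|sg| = 1 := normr_sign _ _.
have sg2 : i%:R * sg * sg = i%:R by rewrite -mulrA -expr2 sqrr_sign mulr1.
have sgE : sg * (xcoord a j - xcoord b j) = `|xcoord a j - xcoord b j|.
  rewrite /sg /s; case: ltP => ab; last by rewrite expr0 mul1r ger0_norm ?subr_ge0.
  by rewrite expr1 mulN1r ltr0_norm ?subr_lt0.
have near_t := near ord0; rewrite /c /null_dir !mxE eqxx unlift_none !mulr1 mul1r in near_t.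
have near_x k' : `|xcoord y k' - xcoord a k' - (if k' == j then i%:R * sg else 0)| < 2 * r.
  have := near (lift ord0 k'); rewrite /c /null_dir !mxE liftK lift_eqF mul0r addr0.
  by rewrite (fun_if ( *%R i%:R)) mulr0.
move: near_t; rewrite ltr_norml => /andP[? ?]; split.
  by apply: (causal_le_near_null_ray sg1 (ler0n _ i) near_x); lra.
move=> /(causal_le_null_coord j sg1).
have := near_x j; rewrite eqxx => near_j.
have : `|sg * (xcoord y j - xcoord a j - i%:R * sg)| < 2 * r by rewrite normrM sg1 mul1r.
by rewrite ltr_norml => /andP[? ?]; lra.
Qed.

Lemma separating_ray_exists (R : realType) d (x x' : mpt R d.+1) : x <> x' ->
  exists q : ray_index d.+1,
    forall i, ray_ball q i `<=` [set y | ~ (causal_le x y <-> causal_le x' y)].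
Proof.
move=> /null_coord_separation [a [b [j [ab sep]]]].
have D0 : 0 < 2 * d.+1%:R + 8 :> R by rewrite ltr_wpDl // mulr_ge0.
have [k rk] := ray_radius_lt (divr_gt0 sep D0); set r := ray_radius R k in rk.
set c := \row_m (a ord0 m + (m == ord0)%:R * (2 * (d.+1%:R + 2) * r)).
exists (k, j, xcoord a j < xcoord b j, lattice_round r c) => i y.
have sep' : (2 * d.+1%:R + 8) * r <= `|xcoord a j - xcoord b j| + tcoord b - tcoord a.
  by rewrite mulrC -ler_pdivlMr //; exact: ltW.
move=> /(ray_ball_separates sep') [ay nby] /=.
by case: ab => -[<- <-] xy; apply: nby; apply/xy.
Qed.

Lemma total_locally_unsymmetric_of_meets_ray_balls (R : realType) d
    (X : set (mpt R d.+1)) :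
  (forall q N, exists i, X `&` ray_ball q (N + i) !=set0) -> total_locally_unsymmetric X.
Proof.
move=> meets; apply: total_locally_unsymmetric_of_separating => x x' E _ _ xx' finE.
have [q sep] := separating_ray_exists xx'.
have [T ET] := finite_set_ub (fun p : mpt R d.+1 => tcoord p) finE.
have [N later] := ray_ball_later q T.
have [i [y [Xy qy]]] := meets q N.
exists y; split => // [Ey|]; last exact: sep qy.
by have := ET y Ey; rewrite leNgt (later i y qy).
Qed.

(** * Sprinkles *)

Lemma negligible_bigcup_countType (d : measure_display) (T : sigmaRingType d)
    (R : realFieldType) (mu : {measure set T -> \bar R}) (I : countType) (F : I -> set T) :
  (forall i, mu.-negligible (F i)) -> mu.-negligible (\bigcup_i F i).
Proof.
move=> negF; apply: (@negligibleS _ _ _ _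
  (\bigcup_n (if unpickle n is Some i then F i else set0))).
  by move=> w [i _ Fiw]; exists (pickle i) => //; rewrite pickleK.
by apply: negligible_bigcup => n; case: (unpickle n) => [i|]; [exact: negF | exact: negligible_set0].
Qed.

Lemma ge0_le_inv1Dn_eq0 (R : realType) (x : \bar R) (a : R) : 0 < a ->
  (0 <= x)%E -> (forall n : nat, (x <= ((1 + a * n%:R)^-1)%:E)%E) -> x = 0%E.
Proof.
move=> a0 x0 le_x.
have xfin : x \is a fin_num.
  by rewrite ge0_fin_numE //; apply: le_lt_trans (le_x 0%N) _; rewrite ltry.
rewrite -(fineK xfin) in x0 le_x *; move: (fine x) x0 le_x => e e0 le_e.
rewrite lee_fin in e0; apply/eqP; rewrite eqe eq_le e0 andbT leNgt; apply/negP => e_gt0.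
have [n aen] := exists_nat_gt (a * e)^-1.
have := le_e n; rewrite lee_fin.
have n0 : 0 < 1 + a * n%:R by rewrite ltr_pwDl // mulr_ge0 // ltW.
rewrite -[X in _ <= X]mul1r ler_pdivlMr // => en.
rewrite -[X in X < _]mul1r ltr_pdivrMr ?mulr_gt0 // in aen.
nra.
Qed.

Lemma count_event0P (T : Type) (R : realType) d (S : T -> set (mpt R d)) K w :
  count_event S K 0 w <-> S w `&` K = set0.
Proof.
rewrite /count_event /= II0; split.
  by move=> S0; apply/eqP; rewrite -(@card_eq0 _ nat).
by move=> ->; rewrite (@card_eq0 _ nat) eqxx.
Qed.

Section Sprinkle.
Variables (R : realType) (d : nat) (rho : R) (dO : measure_display).
Variables (Omega : measurableType dO) (P : probability Omega R) (S : Omega -> set (mpt R d)).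
Hypotheses (rho_gt0 : 0 < rho) (sprinkleS : is_sprinkle rho P S).

Lemma sprinkle_ball_empty (c : mpt R d) (r : R) : 0 < r ->
  measurable (count_event S (ball c r) 0) /\
  P (count_event S (ball c r) 0) =
    (expR (- (rho * fine (leb_vol (ball (0 : mpt R d) r)))))%:E.
Proof.
move=> r0; have [_ [countS _]] := sprinkleS.
have [mS ->] := countS (ball c r) 0%N (precompact_region_ball c r0).
by split => //; rewrite (ball_translate c r0) leb_vol_translate expr0 mulr1 fact0 divr1.
Qed.

Lemma sprinkle_meets_ball_negligible (c : mpt R d) (r : R) : 0 < r ->
  fine (leb_vol (ball (0 : mpt R d) r)) <= 0 ->
  P.-negligible [set w | S w `&` ball c r !=set0].
Proof.
move=> r0 null; have [mE PE] := sprinkle_ball_empty c r0.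
exists (~` count_event S (ball c r) 0); split; first exact: measurableC.
  have le1 := probability_le1 P mE; rewrite PE lee_fin in le1.
  have := expR_ge1Dx (- (rho * fine (leb_vol (ball (0 : mpt R d) r)))).
  have : 0 <= - (rho * fine (leb_vol (ball (0 : mpt R d) r))).
    by rewrite oppr_ge0 mulr_ge0_le0 // ltW.
  by rewrite probability_setC // PE -EFinB => ? ?; congr EFin; lra.
by move=> w [y Sy] /count_event0P Sw0; rewrite Sw0 in Sy.
Qed.

Lemma sprinkle_empty_ae (r : R) : 0 < r -> fine (leb_vol (ball (0 : mpt R d) r)) <= 0 ->
  P.-negligible [set w | S w !=set0].
Proof.
move=> r0 null; pose cell (g : {ffun 'I_d.+1 -> int}) : mpt R d := \row_m (r * (g m)%:~R).
apply: negligibleS (negligible_bigcup_countType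
  (fun g => sprinkle_meets_ball_negligible (cell g) r0 null)).
move=> w [x Sx]; exists (lattice_round r x) => //; exists x; split => //.
apply/(ball_rowP _ _ r0) => m; rewrite mxE ffunE ltr_distl.
by have := mulr_floor_divP (x ord0 m) r0 => /andP[? ?]; apply/andP; split; lra.
Qed.

Lemma sprinkle_disjoint_balls_empty_negligible (c : nat -> mpt R d) (r : R) : 0 < r ->
  0 < fine (leb_vol (ball (0 : mpt R d) r)) ->
  (forall i j, i != j -> ball (c i) r `&` ball (c j) r = set0) ->
  P.-negligible (\bigcap_i count_event S (ball (c i) r) 0).
Proof.
move=> r0 vol_gt0 disj; set v := fine _ in vol_gt0.
have mE i := (sprinkle_ball_empty (c i) r0).1.
apply/negligibleP; first exact: bigcapT_measurable.
apply: (@ge0_le_inv1Dn_eq0 _ _ (rho * v)); [exact: mulr_gt0 | exact: measure_ge0 |].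
move=> n; have [_ [_ indepS]] := sprinkleS.
have {}indepS := indepS n (fun i => ball (c i) r) (fun=> 0%N)
  (fun i => precompact_region_ball (c i) r0) (fun i j ij => disj i j ij).
apply: (@le_trans _ _ (P (\bigcap_(i : 'I_n) count_event S (ball (c i) r) 0))).
  apply: (le_measure P); rewrite ?inE.
  - exact: bigcapT_measurable.
  - by apply: fin_bigcap_measurable => [|i _]; [exact: finite_finset | exact: mE].
  - by move=> w Ew i _; exact: Ew.
rewrite indepS; under eq_bigr do rewrite (sprinkle_ball_empty _ r0).2 -/v.
rewrite prodEFin lee_fin prodr_const card_ord -expRM_natr mulNr -mulrA expRN.
have pos : 0 < 1 + rho * (v * n%:R).
  by apply: (lt_le_trans ltr01); rewrite lerDl !mulr_ge0 // ltW.
by rewrite lef_pV2 ?posrE ?expR_gt0 //; exact: expR_ge1Dx.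
Qed.

Lemma sprinkle_meets_ray_balls_ae :
  (forall k, 0 < fine (leb_vol (ball (0 : mpt R d) (ray_radius R k)))) ->
  P.-negligible [set w | ~ forall q N, exists i, S w `&` ray_ball q (N + i) !=set0].
Proof.
move=> vol_gt0.
have empty q N : P.-negligible (\bigcap_i count_event S (ray_ball q (N + i)) 0).
  case: q => [[[k j] s] g].
  apply: (sprinkle_disjoint_balls_empty_negligible (c := fun i =>
    \row_m (ray_radius R k * (g m)%:~R + (N + i)%:R * null_dir R j s m))
    (ray_radius_gt0 R k) (vol_gt0 k)) => i i' ii'.
  by have := @ray_ball_disjoint R d (k, j, s, g) (N + i) (N + i'); rewrite eqn_add2l; apply.
apply: negligibleS (negligible_bigcup_countType (fun q => negligible_bigcup (empty q))).
move=> w /= meets_not; apply: contrapT => none; apply: meets_not => q N.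
apply: contrapT => miss; apply: none; exists q => //; exists N => // i _.
apply/count_event0P/eqP; apply: contrapT => /negP/set0P meets.
by apply: miss; exists i.
Qed.

End Sprinkle.

Unset Implicit Arguments.

Theorem mainTheorem1 (R : realType) (d : nat) (rho : R) (hrho : 0 < rho)
  (dO : measure_display) (Omega : measurableType dO) (P : probability Omega R)
  (S : Omega -> set (mpt R d)) :
  is_sprinkle rho P S ->
  P.-negligible [set w | ~ total_locally_unsymmetric (S w)].
Proof.
case: d S => [|d] S sprinkleS.
  apply: negligibleS (negligible_set0 P) => w /=; apply.
  exact: total_locally_unsymmetric_dim0.
(* Positivity of the volume of balls is never proved: were some ball null, the
   sprinkle would almost surely be empty. *)
have [[k null]|vol_gt0] :=
  pselect (exists k, fine (leb_vol (ball (0 : mpt R d.+1) (ray_radius R k))) <= 0).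
  apply: negligibleS (sprinkle_empty_ae hrho sprinkleS (ray_radius_gt0 R k) null).
  move=> w /= notTLU; apply/set0P/eqP => S0; apply: notTLU; rewrite S0.
  exact: total_locally_unsymmetric_set0.
apply: negligibleS (sprinkle_meets_ray_balls_ae hrho sprinkleS _) => [w /= notTLU meets|k].
  by apply: notTLU; exact: total_locally_unsymmetric_of_meets_ray_balls.
by rewrite ltNge; apply/negP => null; apply: vol_gt0; exists k.
Qed.
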